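(* Let $\Gamma=(V,E)$ be a locally finite reflexive graph with $V\neq\emptyset$, and let $k$ be a nonnegative integer with $k\le\kappa_1(\Gamma)$. Let $X$ be a finite subset of $V$ with $\min(|V\setminus X|,|X|)\ge k$. Then there exist pairwise distinct $x_1,\dots,x_k\in X$ and pairwise distinct $y_1,\dots,y_k\in V\setminus X$ such that $(x_i,y_i)\in E$ for all $1\le i\le k$.
   Context: A graph is a pair $\Gamma=(V,E)$ with $E\subseteq V\times V$; reflexive means $(x,x)\in E$ for all $x$; locally finite means each $\Gamma(x)=\{y:(x,y)\in E\}$ is finite. $\Gamma(A)=\bigcup_{x\in A}\Gamma(x)$, $\partial(A)=\Gamma(A)\setminus A$. If there is a finite nonempty $X$ with $\Gamma(X)\neq V$, then $\kappa_1(\Gamma)=\min\{|\partial(X)|: X \text{ finite nonempty}, \Gamma(X)\ne V\}$; otherwise ($V$ finite) $\kappa_1(\Gamma)=|V|-1$ by convention. *)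

From Stdlib Require Export List Arith.
Export ListNotations.

Definition finite {V : Type} (A : V -> Prop) : Prop :=
  exists l : list V, forall x, A x -> In x l.

Definition has_card {V : Type} (A : V -> Prop) (n : nat) : Prop :=
  exists l : list V, NoDup l /\ length l = n /\ forall x, A x <-> In x l.

(* |A| >= k  (meaningful also for infinite A) *)
Definition card_ge {V : Type} (A : V -> Prop) (k : nat) : Prop :=
  exists l : list V, NoDup l /\ length l = k /\ forall x, In x l -> A x.

Definition reflexive_graph {V : Type} (E : V -> V -> Prop) : Prop :=
  forall x, E x x.

Definition locally_finite {V : Type} (E : V -> V -> Prop) : Prop :=
  forall x, finite (fun y => E x y).

Definition nbhd {V : Type} (E : V -> V -> Prop) (A : V -> Prop) : V -> Prop :=
  fun y => exists x, A x /\ E x y.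

Definition boundary {V : Type} (E : V -> V -> Prop) (A : V -> Prop) : V -> Prop :=
  fun y => nbhd E A y /\ ~ A y.

Definition kappa1_admissible {V : Type} (E : V -> V -> Prop) (X : V -> Prop) : Prop :=
  finite X /\ (exists x, X x) /\ (exists v, ~ nbhd E X v).

(* is_kappa1 E n  <->  kappa_1(Gamma) = n, following the definition:
   the minimum of |boundary X| over admissible X if some admissible X exists,
   otherwise |V| - 1 (V finite, with |V| = n + 1). *)
Definition is_kappa1 {V : Type} (E : V -> V -> Prop) (n : nat) : Prop :=
  ((exists X, kappa1_admissible E X) /\
   (exists X, kappa1_admissible E X /\ has_card (boundary E X) n) /\
   (forall X m, kappa1_admissible E X -> has_card (boundary E X) m -> n <= m))
  \/
  ((~ exists X, kappa1_admissible E X) /\ has_card (fun _ : V => True) (S n)).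

From Stdlib Require Import List Arith Lia Classical ClassicalEpsilon.

(* Enumerate the finite set X as a duplicate-free list Lx and put
   d = |X| - k.  The wanted pairs form a matching of size |X| - d = k in the
   bipartite graph joining x in X to its neighbours outside X.  By the defect
   version of Hall's theorem it suffices that every A included in X has at
   least |A| - d neighbours outside X.  For nonempty A this is the content of
   kappa_1: if Gamma(A) <> V then |boundary(A)| >= kappa_1 >= k, and at most
   |X| - |A| boundary points lie in X; if Gamma(A) = V then all of the (at
   least k) points outside X are neighbours of A. *)

Definition pfilter {T : Type} (P : T -> Prop) (l : list T) : list T :=
  filter (fun x => if excluded_middle_informative (P x) then true else false) l.

Lemma pfilter_In {T : Type} (P : T -> Prop) (l : list T) (x : T) :
  In x (pfilter P l) <-> In x l /\ P x.
Proof.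
  unfold pfilter; rewrite filter_In.
  destruct (excluded_middle_informative (P x)); intuition congruence.
Qed.

Lemma pfilter_NoDup {T : Type} (P : T -> Prop) (l : list T) :
  NoDup l -> NoDup (pfilter P l).
Proof. apply NoDup_filter. Qed.

Lemma pfilter_length_split {T : Type} (P : T -> Prop) (l : list T) :
  length (pfilter P l) + length (pfilter (fun x => ~ P x) l) = length l.
Proof.
  induction l as [|a l IH]; unfold pfilter in *; simpl; [reflexivity|].
  destruct (excluded_middle_informative (P a));
    destruct (excluded_middle_informative (~ P a)); simpl; tauto || lia.
Qed.

Lemma pfilter_out_length {T : Type} (Q : T -> Prop) (l r : list T) :
  NoDup l -> (forall y, In y l -> Q y -> In y r) ->
  length l <= length (pfilter (fun y => ~ Q y) l) + length r.
Proof.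
  intros Hl Hr.
  assert (Hin : length (pfilter Q l) <= length r).
  { apply NoDup_incl_length; [now apply pfilter_NoDup|].
    intros y Hy; apply pfilter_In in Hy; now apply Hr. }
  pose proof (pfilter_length_split Q l); lia.
Qed.

Lemma NoDup_firstn {T : Type} (l : list T) (n : nat) : NoDup l -> NoDup (firstn n l).
Proof. intro H; rewrite <- (firstn_skipn n l) in H; exact (NoDup_app_remove_r _ _ H). Qed.

Lemma In_firstn {T : Type} (l : list T) (n : nat) (x : T) : In x (firstn n l) -> In x l.
Proof. intro H; rewrite <- (firstn_skipn n l); apply in_or_app; auto. Qed.

Lemma card_ge_0 {T : Type} (P : T -> Prop) : card_ge P 0.
Proof. exists []; repeat split; [constructor | intros _ []]. Qed.

Lemma card_ge_of_list {T : Type} (P : T -> Prop) (l : list T) (m : nat) :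
  NoDup l -> (forall y, In y l -> P y) -> m <= length l -> card_ge P m.
Proof.
  intros Hl HP Hm; exists (firstn m l); repeat split.
  - now apply NoDup_firstn.
  - rewrite length_firstn; lia.
  - intros x Hx; apply HP; eapply In_firstn; eauto.
Qed.

Lemma finite_enum {T : Type} (P : T -> Prop) :
  finite P -> exists l, NoDup l /\ forall x, P x <-> In x l.
Proof.
  intros [l Hl].
  exists (nodup (fun x y => excluded_middle_informative (x = y)) (pfilter P l)).
  split; [apply NoDup_nodup|].
  intro x; rewrite nodup_In, pfilter_In; firstorder.
Qed.

Section Hall.
Context {U W : Type}.

Definition neighbours (R : U -> W -> Prop) (A : list U) : W -> Prop :=
  fun y => exists x, In x A /\ R x y.

Definition hall_condition (R : U -> W -> Prop) (L : list U) : Prop :=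
  forall A, NoDup A -> incl A L -> card_ge (neighbours R A) (length A).

Definition sdr (R : U -> W -> Prop) (L : list U) (g : U -> W) : Prop :=
  (forall x, In x L -> R x (g x)) /\
  (forall x y, In x L -> In y L -> g x = g y -> x = y).

Lemma sdr_weaken (R R' : U -> W -> Prop) (L : list U) (g : U -> W) :
  (forall x y, R' x y -> R x y) -> sdr R' L g -> sdr R L g.
Proof. intros HR [Hg Hinj]; split; auto. Qed.

Lemma sdr_join (R : U -> W -> Prop) (L A B : list U) (g1 g2 : U -> W) :
  (forall x, In x L -> In x A \/ In x B) ->
  sdr R A g1 -> sdr R B g2 ->
  (forall a b, In a A -> In b B -> g1 a <> g2 b) ->
  sdr R L (fun x => if excluded_middle_informative (In x A) then g1 x else g2 x).
Proof.
  intros Hcov [Hg1 Hinj1] [Hg2 Hinj2] Hdisj; split.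
  - intros x Hx; destruct (excluded_middle_informative (In x A)) as [HA|HA]; auto.
    destruct (Hcov x Hx); [contradiction | auto].
  - intros x y Hx Hy.
    destruct (excluded_middle_informative (In x A)) as [HxA|HxA];
      destruct (excluded_middle_informative (In y A)) as [HyA|HyA]; intro Heq.
    + now apply Hinj1.
    + destruct (Hcov y Hy); [contradiction|]. now destruct (Hdisj x y).
    + destruct (Hcov x Hx); [contradiction|]. now destruct (Hdisj y x).
    + destruct (Hcov x Hx), (Hcov y Hy); try contradiction. now apply Hinj2.
Qed.

(* After matching a critical set A (one with exactly |A| neighbours, all in
   lA), Hall's condition survives on the rest of L once lA is forbidden. *)
Lemma hall_condition_critical (R : U -> W -> Prop) (L A : list U) (lA : list W) :
  hall_condition R L -> NoDup A -> incl A L ->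
  (forall y, neighbours R A y -> In y lA) -> length lA <= length A ->
  hall_condition (fun x y => R x y /\ ~ In y lA) (pfilter (fun x => ~ In x A) L).
Proof.
  intros HH HAn HAi HlA Hlen B HBn HBi.
  assert (HBA : forall b, In b B -> In b L /\ ~ In b A)
    by (intros b Hb; apply (pfilter_In (fun x => ~ In x A)); now apply HBi).
  destruct (HH (A ++ B)) as [l [Hln [Hll Hli]]].
  - apply NoDup_app; auto. intros a Ha Hb; now apply (HBA a).
  - intros a Ha; apply in_app_or in Ha as [Ha|Ha]; [auto | now apply HBA].
  - pose proof (pfilter_out_length (fun y => In y lA) l lA Hln (fun y _ h => h)).
    rewrite length_app in Hll.
    apply (card_ge_of_list _ (pfilter (fun y => ~ In y lA) l)); [now apply pfilter_NoDup| |lia].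
    intros y Hy; apply pfilter_In in Hy as [Hy HylA].
    destruct (Hli y Hy) as [x [Hx Hxy]]; apply in_app_or in Hx as [Hx|Hx].
    + exfalso; apply HylA, HlA; now exists x.
    + now exists x.
Qed.

(* If every nonempty proper subset has a surplus neighbour, one may match x0
   to any of its neighbours y0 and keep Hall's condition on the rest. *)
Lemma hall_condition_surplus (R : U -> W -> Prop) (x0 : U) (L0 : list U) (y0 : W) :
  NoDup (x0 :: L0) ->
  (forall A, NoDup A -> incl A (x0 :: L0) -> A <> [] -> length A < length (x0 :: L0) ->
     card_ge (neighbours R A) (S (length A))) ->
  hall_condition (fun x y => R x y /\ y <> y0) L0.
Proof.
  intros HL Hsurplus B HBn HBi.
  destruct B as [|b B']; [apply card_ge_0|].
  inversion HL as [|? ? Hx0 HL0]; subst.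
  assert (Hshort : length (b :: B') < length (x0 :: L0)).
  { assert (Hx0B : NoDup (x0 :: b :: B')) by (constructor; auto).
    apply (NoDup_incl_length Hx0B); intros z [<-|Hz]; simpl; auto. }
  destruct (Hsurplus (b :: B')) as [l [Hln [Hll Hli]]]; auto; [intros z Hz; simpl; auto | discriminate|].
  pose proof (pfilter_out_length (fun y => y = y0) l [y0] Hln
                (fun y _ h => or_introl (eq_sym h))).
  apply (card_ge_of_list _ (pfilter (fun y => y <> y0) l)); [now apply pfilter_NoDup| |simpl in *; lia].
  intros y Hy; apply pfilter_In in Hy as [Hy Hyy0].
  destruct (Hli y Hy) as [x [Hx Hxy]]; now exists x.
Qed.

Definition hall_statement (L : list U) : Prop :=
  forall R, NoDup L -> hall_condition R L -> exists g, sdr R L g.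

Lemma hall_step_critical (R : U -> W -> Prop) (L A : list U) :
  (forall L', length L' < length L -> hall_statement L') ->
  NoDup L -> hall_condition R L ->
  NoDup A -> incl A L -> A <> [] -> length A < length L ->
  ~ card_ge (neighbours R A) (S (length A)) ->
  exists g, sdr R L g.
Proof.
  intros IH HL HH HAn HAi HAne HAl HAc.
  destruct (HH A HAn HAi) as [lA [HlAn [HlAl HlAi]]].
  assert (HlA : forall y, neighbours R A y -> In y lA).
  { intros y Hy; apply NNPP; intro Hn; apply HAc.
    exists (y :: lA); repeat split; [constructor; auto | simpl; lia |].
    intros z [<-|Hz]; auto. }
  set (L2 := pfilter (fun x => ~ In x A) L).
  assert (HL2 : length L2 < length L).
  { pose proof (pfilter_length_split (fun x => In x A) L).
    assert (length A <= length (pfilter (fun x => In x A) L)).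
    { apply NoDup_incl_length; auto. intros a Ha; apply pfilter_In; auto. }
    destruct A; [congruence | simpl in *; unfold L2; lia]. }
  destruct (IH A HAl R HAn) as [g1 Hg1].
  { intros B HBn HBi; apply HH; auto. intros z Hz; auto. }
  destruct (IH L2 HL2 (fun x y => R x y /\ ~ In y lA)) as [g2 Hg2];
    [now apply pfilter_NoDup | apply hall_condition_critical; auto; lia|].
  exists (fun x => if excluded_middle_informative (In x A) then g1 x else g2 x).
  apply (sdr_join R L A L2).
  - intros x Hx; destruct (classic (In x A)); [left | right; apply pfilter_In]; auto.
  - exact Hg1.
  - apply (sdr_weaken _ _ _ _ (fun x y H => proj1 H) Hg2).
  - intros a b Ha Hb Heq. apply (proj2 (proj1 Hg2 b Hb)).
    rewrite <- Heq; apply HlA; exists a; split; auto; now apply Hg1.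
Qed.

Lemma hall_step_surplus (R : U -> W -> Prop) (x0 : U) (L0 : list U) :
  hall_statement L0 -> NoDup (x0 :: L0) -> hall_condition R (x0 :: L0) ->
  (forall A, NoDup A -> incl A (x0 :: L0) -> A <> [] -> length A < length (x0 :: L0) ->
     card_ge (neighbours R A) (S (length A))) ->
  exists g, sdr R (x0 :: L0) g.
Proof.
  intros IH HL HH Hsurplus.
  assert (Hsingle : card_ge (neighbours R [x0]) 1).
  { apply HH; [repeat constructor; auto | intros z [<-|[]]; simpl; auto]. }
  destruct Hsingle as [[|y0 l1] [_ [Hl1 Hl1i]]]; [discriminate|].
  destruct (Hl1i y0 (or_introl eq_refl)) as [x' [[<-|[]] Hy0]].
  inversion HL as [|? ? Hx0 HL0]; subst.
  destruct (IH (fun x y => R x y /\ y <> y0) HL0) as [g' Hg'];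
    [now apply (hall_condition_surplus R x0 L0 y0) |].
  exists (fun x => if excluded_middle_informative (In x [x0]) then y0 else g' x).
  apply (sdr_join R (x0 :: L0) [x0] L0 (fun _ => y0) g').
  - intros x [<-|Hx]; [left; now left | now right].
  - split; [intros x [<-|[]]; exact Hy0 | intros x y [<-|[]] [<-|[]] _; reflexivity].
  - apply (sdr_weaken _ _ _ _ (fun x y H => proj1 H) Hg').
  - intros a b _ Hb Heq; apply (proj2 (proj1 Hg' b Hb)); auto.
Qed.

(* Hall's marriage theorem for a finite family; W is assumed inhabited only to
   have some function U -> W at hand. *)
Theorem hall (w0 : W) (L : list U) : hall_statement L.
Proof.
  remember (length L) as n eqn:Hn; revert L Hn.
  induction n as [n IH] using lt_wf_ind; intros L Hn R HL HH.
  destruct L as [|x0 L0]; [exists (fun _ => w0); split; simpl; tauto|].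
  assert (IH' : forall L', length L' < length (x0 :: L0) -> hall_statement L')
    by (intros L' HL'; subst n; eapply IH; eauto).
  destruct (classic (exists A, NoDup A /\ incl A (x0 :: L0) /\ A <> [] /\
        length A < length (x0 :: L0) /\ ~ card_ge (neighbours R A) (S (length A))))
    as [[A [HAn [HAi [HAne [HAl HAc]]]]] | Hnone].
  - now apply (hall_step_critical R (x0 :: L0) A).
  - apply hall_step_surplus; [apply IH'; simpl; lia | exact HL | exact HH |].
    intros A HAn HAi HAne HAl; apply NNPP; intro HAc; apply Hnone; now exists A.
Qed.

Definition matching (R : U -> W -> Prop) (p : list (U * W)) : Prop :=
  NoDup (map fst p) /\ NoDup (map snd p) /\ forall xy, In xy p -> R (fst xy) (snd xy).

Lemma matching_firstn (R : U -> W -> Prop) (p : list (U * W)) (n : nat) :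
  matching R p -> matching R (firstn n p).
Proof.
  intros [Hfst [Hsnd Hedges]]; split; [|split].
  - rewrite <- firstn_map; now apply NoDup_firstn.
  - rewrite <- firstn_map; now apply NoDup_firstn.
  - intros xy Hxy; apply Hedges; eapply In_firstn; eauto.
Qed.

Lemma sdr_matching (R : U -> W -> Prop) (L : list U) (g : U -> W) :
  NoDup L -> sdr R L g -> matching (fun x y => In x L /\ R x y) (map (fun x => (x, g x)) L).
Proof.
  intros HL [Hg Hinj]; split; [|split].
  - now rewrite map_map, map_id.
  - rewrite map_map; simpl.
    apply NoDup_map_NoDup_ForallPairs; [intros x y Hx Hy; now apply Hinj | exact HL].
  - intros xy Hxy; apply in_map_iff in Hxy as [x [<- Hx]]; simpl; auto.
Qed.

End Hall.

(* The relation padded with d dummy partners inr 0, ..., inr (d-1), which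
   every element accepts. *)
Definition padded {U W : Type} (R : U -> W -> Prop) (d : nat) (x : U) (w : W + nat) : Prop :=
  match w with inl y => R x y | inr i => i < d end.

Lemma padded_hall_condition {U W : Type} (R : U -> W -> Prop) (L : list U) (d : nat) :
  (forall A, NoDup A -> incl A L -> card_ge (neighbours R A) (length A - d)) ->
  hall_condition (padded R d) L.
Proof.
  intros Hdef [|a A'] HAn HAi; [apply card_ge_0|].
  destruct (Hdef (a :: A') HAn HAi) as [l [Hln [Hll Hli]]].
  apply (card_ge_of_list _ (map inl l ++ map inr (seq 0 d))).
  - apply NoDup_app.
    + apply NoDup_map_NoDup_ForallPairs; auto. intros u v _ _ h; now injection h.
    + apply NoDup_map_NoDup_ForallPairs; [intros u v _ _ h; now injection h | apply seq_NoDup].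
    + intros w Hw1 Hw2; apply in_map_iff in Hw1 as [? [<- _]].
      apply in_map_iff in Hw2 as [? [? _]]; discriminate.
  - intros w Hw; apply in_app_or in Hw as [Hw|Hw]; apply in_map_iff in Hw.
    + destruct Hw as [y [<- Hy]]. destruct (Hli y Hy) as [x [Hx Hxy]]; now exists x.
    + destruct Hw as [i [<- Hi]]; apply in_seq in Hi. exists a; simpl; split; auto; lia.
  - rewrite length_app, !length_map, length_seq; lia.
Qed.

Lemma padded_dummies_bound {U W : Type} (R : U -> W -> Prop) (L : list U) (d : nat) (g : U -> W + nat) :
  NoDup L -> sdr (padded R d) L g ->
  length (pfilter (fun x => ~ exists y, g x = inl y) L) <= d.
Proof.
  intros HL [Hg Hinj].
  set (Lo := pfilter (fun x => ~ exists y, g x = inl y) L).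
  set (dummy := fun x => match g x with inr i => i | inl _ => 0 end).
  assert (Hdummy : forall x, In x Lo -> g x = inr (dummy x) /\ dummy x < d).
  { intros x Hx; apply pfilter_In in Hx as [Hx Hno].
    specialize (Hg x Hx); unfold dummy, padded in *.
    destruct (g x) as [y|i]; [exfalso; apply Hno; now exists y | auto]. }
  rewrite <- (length_map dummy Lo).
  apply (Nat.le_trans _ (length (seq 0 d))); [apply NoDup_incl_length | now rewrite length_seq].
  - apply NoDup_map_NoDup_ForallPairs; [|now apply pfilter_NoDup].
    intros x y Hx Hy Heq; apply Hinj; [apply (proj1 (pfilter_In _ _ x) Hx) | apply (proj1 (pfilter_In _ _ y) Hy) |].
    rewrite (proj1 (Hdummy x Hx)), (proj1 (Hdummy y Hy)); congruence.
  - intros i Hi; apply in_map_iff in Hi as [x [<- Hx]].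
    apply in_seq; pose proof (Hdummy x Hx); lia.
Qed.

Theorem hall_defect {U W : Type} (w0 : W) (R : U -> W -> Prop) (L : list U) (d : nat) :
  NoDup L ->
  (forall A, NoDup A -> incl A L -> card_ge (neighbours R A) (length A - d)) ->
  exists p, matching (fun x y => In x L /\ R x y) p /\ length L - d <= length p.
Proof.
  intros HL Hdef.
  destruct (hall (inr 0) L (padded R d) HL (padded_hall_condition R L d Hdef)) as [g Hg].
  set (Lm := pfilter (fun x => exists y, g x = inl y) L).
  set (partner := fun x => match g x with inl y => y | inr _ => w0 end).
  assert (Hpartner : sdr (fun x y => In x L /\ R x y) Lm partner).
  { split.
    - intros x Hx; apply pfilter_In in Hx as [Hx [y Hy]].
      pose proof (proj1 Hg x Hx) as Hr; unfold partner, padded in *; rewrite Hy in *; auto.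
    - intros x y Hx Hy; apply pfilter_In in Hx as [Hx [u Hu]]; apply pfilter_In in Hy as [Hy [v Hv]].
      unfold partner; rewrite Hu, Hv; intros <-; apply (proj2 Hg); congruence. }
  exists (map (fun x => (x, partner x)) Lm); split.
  - pose proof (sdr_matching _ Lm partner (pfilter_NoDup _ _ HL) Hpartner) as [Hfst [Hsnd Hedges]].
    split; [exact Hfst | split; [exact Hsnd | intros xy Hxy; apply (Hedges xy Hxy)]].
  - rewrite length_map.
    pose proof (pfilter_length_split (fun x => exists y, g x = inl y) L).
    pose proof (padded_dummies_bound R L d g HL Hg); unfold Lm; lia.
Qed.


Lemma nbhd_list_finite {V : Type} (E : V -> V -> Prop) (A : list V) :
  locally_finite E -> finite (nbhd E (fun z => In z A)).
Proof.
  intro Hlf; induction A as [|a A [l Hl]]; [exists []; intros y [x [[] _]]|].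
  destruct (Hlf a) as [la Hla]; exists (la ++ l).
  intros y [x [[<-|Hx] Hxy]]; apply in_or_app; [left; auto | right; apply Hl; now exists x].
Qed.

Lemma kappa1_boundary_bound {V : Type} (E : V -> V -> Prop) (kap : nat) (A : V -> Prop) :
  is_kappa1 E kap -> kappa1_admissible E A -> finite (boundary E A) ->
  exists lb, NoDup lb /\ kap <= length lb /\ forall y, boundary E A y <-> In y lb.
Proof.
  intros Hkap Had Hfin; destruct (finite_enum _ Hfin) as [lb [Hlbn Hlb]].
  exists lb; split; [exact Hlbn | split; [|exact Hlb]].
  destruct Hkap as [[_ [_ Hmin]] | [Hno _]].
  - apply (Hmin _ _ Had); now exists lb.
  - exfalso; apply Hno; eauto.
Qed.

Lemma outer_neighbours_bound {V : Type} (E : V -> V -> Prop) (k kap : nat) (X : V -> Prop)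
    (Lx A : list V) :
  locally_finite E -> is_kappa1 E kap -> k <= kap ->
  (forall x, X x <-> In x Lx) -> card_ge (fun v => ~ X v) k ->
  NoDup A -> incl A Lx ->
  card_ge (neighbours (fun x y => E x y /\ ~ X y) A) (length A - (length Lx - k)).
Proof.
  intros Hlf Hkap Hkk HLx HVX HAn HAi.
  pose proof (NoDup_incl_length HAn HAi) as HAL.
  destruct A as [|a A']; [apply card_ge_0|].
  destruct (classic (exists v, ~ nbhd E (fun z => In z (a :: A')) v)) as [Hv|Hv].
  - (* Gamma(A) <> V: the boundary has >= kappa_1 points, <= |X| - |A| of them in X *)
    destruct (kappa1_boundary_bound E kap (fun z => In z (a :: A')) Hkap)
      as [lb [Hlbn [Hm Hlb]]].
    { split; [now exists (a :: A') | split; [exists a; now left | exact Hv]]. }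
    { destruct (nbhd_list_finite E (a :: A') Hlf) as [l Hl]; exists l; intros x [Hx _]; auto. }
    pose proof (pfilter_out_length (fun y => In y Lx) lb (pfilter (fun y => In y Lx) lb) Hlbn
                  (fun y Hy HyX => proj2 (pfilter_In _ _ _) (conj Hy HyX))) as Hout.
    cbv beta in Hout.
    assert (Hin : length (pfilter (fun y => In y Lx) lb) + length (a :: A') <= length Lx).
    { rewrite <- length_app; apply NoDup_incl_length.
      - apply NoDup_app; [now apply pfilter_NoDup | auto |].
        intros y Hy HyA; apply pfilter_In in Hy as [Hy _].
        apply Hlb in Hy as [_ HnA]; exact (HnA HyA).
      - intros y Hy; apply in_app_or in Hy as [Hy|Hy]; [now apply pfilter_In in Hy | auto]. }
    apply (card_ge_of_list _ (pfilter (fun y => ~ In y Lx) lb)); [now apply pfilter_NoDup| |lia].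
    intros y Hy; apply pfilter_In in Hy as [Hy HyX].
    apply Hlb in Hy as [[x [Hx Hxy]] _]; exists x; repeat split; auto; now rewrite HLx.
  - (* Gamma(A) = V: every one of the >= k points outside X is a neighbour *)
    destruct HVX as [lc [Hlcn [Hlcl Hlci]]].
    apply (card_ge_of_list _ lc); auto; [|lia].
    intros y Hy; destruct (NNPP (nbhd E (fun z => In z (a :: A')) y)) as [x [Hx Hxy]];
      [intro Hn; apply Hv; now exists y | exists x; auto].
Qed.

Theorem mainTheorem19 (V : Type) (E : V -> V -> Prop)
  (Hrefl : reflexive_graph E) (Hlf : locally_finite E) (Hne : inhabited V)
  (k : nat) (Hk : exists kap, is_kappa1 E kap /\ k <= kap)
  (X : V -> Prop) (HXfin : finite X)
  (HX : card_ge X k) (HVX : card_ge (fun v => ~ X v) k) :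
  exists p : list (V * V),
    length p = k /\ NoDup (map fst p) /\ NoDup (map snd p) /\
    (forall xy, In xy p -> X (fst xy) /\ ~ X (snd xy) /\ E (fst xy) (snd xy)).
Proof.
  destruct Hk as [kap [Hkap Hkk]]; destruct Hne as [v0].
  destruct (finite_enum X HXfin) as [Lx [HLxn HLx]].
  assert (HkL : k <= length Lx).
  { destruct HX as [l [Hln [Hll Hli]]]; rewrite <- Hll.
    apply NoDup_incl_length; auto; intros z Hz; now apply HLx, Hli. }
  destruct (hall_defect v0 (fun x y => E x y /\ ~ X y) Lx (length Lx - k) HLxn
              (fun A HAn HAi => outer_neighbours_bound E k kap X Lx A Hlf Hkap Hkk HLx HVX HAn HAi))
    as [p [Hp Hlen]].
  destruct (matching_firstn _ p k Hp) as [Hfst [Hsnd Hedges]].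
  exists (firstn k p); split; [rewrite length_firstn; lia|].
  split; [exact Hfst | split; [exact Hsnd|]].
  intros xy Hxy; destruct (Hedges xy Hxy) as [HxL [HE HnX]].
  split; [now apply HLx | split; assumption].
Qed.
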